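(* Let $m\ge 4$ be an integer. If $H$ is a finite simple connected graph of order greater than $m$, then the Cartesian product $K_m \,\square\, H$ is not well-dominated.
   Context: A graph is well-dominated if every minimal (with respect to inclusion) dominating set is a minimum dominating set. The Cartesian product $G\,\square\, H$ has vertex set $V(G)\times V(H)$, with $(g_1,h_1)$ adjacent to $(g_2,h_2)$ iff either ($g_1=g_2$ and $h_1h_2\in E(H)$) or ($h_1=h_2$ and $g_1g_2\in E(G)$). *)

From mathcomp Require Import all_boot.
Set Implicit Arguments. Unset Strict Implicit. Unset Printing Implicit Defensive.

Definition simple_graph (T : finType) (e : rel T) : Prop :=
  symmetric e /\ irreflexive e.

Definition connected_graph (T : finType) (e : rel T) : Prop :=
  forall x y : T, connect e x y.

Definition complete_rel (m : nat) : rel 'I_m := fun i j => i != j.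

Definition cartesian_rel (A B : finType) (eA : rel A) (eB : rel B) : rel (A * B) :=
  fun u v => ((u.1 == v.1) && eB u.2 v.2) || ((u.2 == v.2) && eA u.1 v.1).

Definition dominating (T : finType) (e : rel T) (D : {set T}) : Prop :=
  forall x : T, x \in D \/ exists2 y, y \in D & e x y.

Definition minimal_dominating (T : finType) (e : rel T) (D : {set T}) : Prop :=
  dominating e D /\ forall D' : {set T}, D' \proper D -> ~ dominating e D'.

Definition minimum_dominating (T : finType) (e : rel T) (D : {set T}) : Prop :=
  dominating e D /\ forall D' : {set T}, dominating e D' -> #|D| <= #|D'|.

Definition well_dominated (T : finType) (e : rel T) : Prop :=
  forall D : {set T}, minimal_dominating e D -> minimum_dominating e D.

From mathcomp Require Import all_boot zify.

Set Implicit Arguments. Unset Strict Implicit. Unset Printing Implicit Defensive.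

(* Write n = |V(H)|, N[x] for closed neighbourhoods in H and N[S] for their union over S.
   For S ⊆ V(H), K_m × S together with the c0-layer copy of V(H) ∖ N[S] dominates K_m □ H,
   and it is a minimal dominating set when every s ∈ S has a private neighbour y ∉ S with
   N[y] ⊆ N[S]; for S = ∅ this is a whole layer, so in a well-dominated K_m □ H every
   minimal dominating set has n elements.  Hence |N[S]| ≤ m|S|, with equality in the
   private-neighbour case, and two further families of minimal dominating sets give
   |N[x]| = m - 1 if no neighbour c of x has N[c] ⊆ N[x], and |N[x]| = m if no vertex outside
   N[x] is adjacent to all of N(x).  A dominating set of H all of whose vertices have external
   private neighbours (Bollobás–Cockayne) then splits V(H) into disjoint closed neighbourhoods
   of size m.  Since H is connected and n > m, some edge uv joins two of these blocks; then u
   and v both have false twins, which forces |N[u] ∪ N[v]| = 2m although both have size m - 1. *)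

Section Domination.
Variables (U : finType) (r : rel U).

Lemma private_minimal_dominating (D : {set U}) :
  dominating r D ->
  (forall p, p \in D -> exists q, forall y, y \in D -> y = q \/ r q y -> y = p) ->
  minimal_dominating r D.
Proof.
move=> domD privD; split=> // D' /properP[/subsetP subD'D [p pD pD']] domD'.
have [q privq] := privD p pD.
case: (domD' q) => [qD' | [y yD' qy]].
  by move: pD'; rewrite -(privq q (subD'D _ qD')) ?qD'; last by left.
by move: pD'; rewrite -(privq y (subD'D _ yD')) ?yD'; last by right.
Qed.

Lemma well_dominated_cardE (D D' : {set U}) : well_dominated r ->
  minimal_dominating r D -> minimal_dominating r D' -> #|D| = #|D'|.
Proof.
move=> wd minD minD'; apply/eqP; rewrite eqn_leq.
by rewrite (wd D minD).2 ?(wd D' minD').2 //; [exact: minD.1 | exact: minD'.1].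
Qed.

End Domination.

Lemma exists_onto (I T : finType) (A : {set I}) (B : {set T}) :
  0 < #|B| <= #|A| -> exists f : I -> T, (forall i, f i \in B) /\ B \subset f @: A.
Proof.
case/andP=> /card_gt0P[b0 Bb0] leBA.
have [i0 Ai0] : exists i0, i0 \in A.
  by apply/card_gt0P; apply: leq_trans leBA; apply/card_gt0P; exists b0.
pose f i := nth b0 (enum B) (index i (enum A)).
exists f; split=> [i|].
  rewrite /f; have [lt|ge] := ltnP (index i (enum A)) (size (enum B)).
    by rewrite -mem_enum mem_nth.
  by rewrite nth_default.
apply/subsetP=> b Bb; apply/imsetP.
have ltb : index b (enum B) < size (enum A).
  by rewrite -cardE (leq_trans _ leBA) // cardE index_mem mem_enum.
exists (nth i0 (enum A) (index b (enum B))); first by rewrite -mem_enum mem_nth.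
by rewrite /f index_uniq ?enum_uniq // nth_index ?mem_enum.
Qed.

Section SimpleGraph.
Variables (T : finType) (e : rel T).
Hypotheses (esym : symmetric e) (eirr : irreflexive e).
Implicit Types (S : {set T}) (x : T).

Definition nbhd x : {set T} := [set y | e x y].
Definition cnbhd x : {set T} := x |: nbhd x.
Definition cnbhds (S : {set T}) : {set T} := \bigcup_(s in S) cnbhd s.

Lemma in_nbhd x y : (y \in nbhd x) = e x y.
Proof. by rewrite inE. Qed.

Lemma in_cnbhd x y : (y \in cnbhd x) = (y == x) || e x y.
Proof. by rewrite !inE. Qed.

Lemma cnbhd_id x : x \in cnbhd x.
Proof. exact: setU11. Qed.

Lemma cnbhdC x y : (x \in cnbhd y) = (y \in cnbhd x).
Proof. by rewrite !in_cnbhd eq_sym esym. Qed.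

Lemma card_cnbhd x : #|cnbhd x| = #|nbhd x|.+1.
Proof. by rewrite cardsU1 in_nbhd eirr. Qed.

Lemma cnbhds0 : cnbhds set0 = set0.
Proof. by rewrite /cnbhds big_set0. Qed.

Lemma cnbhds1 x : cnbhds [set x] = cnbhd x.
Proof. by rewrite /cnbhds big_set1. Qed.

Lemma cnbhdsD1 S s : s \in S -> cnbhds S = cnbhd s :|: cnbhds (S :\ s).
Proof. by move=> sS; rewrite /cnbhds (big_setD1 s sS). Qed.

Lemma cnbhds2 a b : a != b -> cnbhds [set a; b] = cnbhd a :|: cnbhd b.
Proof.
move=> ab; rewrite (cnbhdsD1 (setU11 a [set b])) setU1K ?cnbhds1 //.
by rewrite inE.
Qed.

Lemma cnbhd_sub S s : s \in S -> cnbhd s \subset cnbhds S.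
Proof. exact: bigcup_sup. Qed.

Lemma connected_cross (A : {set T}) x y : connected_graph e -> x \in A -> y \notin A ->
  exists a b, [/\ a \in A, b \notin A & e a b].
Proof.
move=> conn xA yA.
have [/existsP[a /existsP[b /and3P[aA bA eab]]] | noedge] :=
  boolP [exists a, exists b, [&& a \in A, b \notin A & e a b]]; first by exists a, b.
have clA : closed e A.
  apply: (intro_closed (sym_connect_sym esym)) => a b eab aA; apply: contraNT noedge => bA.
  by apply/existsP; exists a; apply/existsP; exists b; rewrite aA bA eab.
by move: (closed_connect clA (conn x y)); rewrite xA (negbTE yA).
Qed.

Lemma connected_nbhd_neq0 x : connected_graph e -> 1 < #|T| -> nbhd x != set0.
Proof.
move=> conn n_gt1; have /card_gt0P[z] : 0 < #|[set~ x]| by rewrite cardsC1; lia.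
rewrite in_setC1 -in_set1 => zx.
have [a [b [/set1P-> _ exb]]] := connected_cross conn (set11 x) zx.
by apply/set0Pn; exists b; rewrite in_nbhd.
Qed.

(** * External private neighbours *)

Definition ext_private S s y :=
  [&& y \notin S, e s y & [forall t in S, e y t ==> (t == s)]].

Lemma other_dominator S s y : ~~ ext_private S s y -> y \notin S -> e s y ->
  exists2 t, t \in S :\ s & e y t.
Proof.
move=> npriv yS esy; have /forall_inPn[t tS] : ~~ [forall t in S, e y t ==> (t == s)].
  by move: npriv; rewrite /ext_private yS esy.
by rewrite negb_imply => /andP[eyt ts]; exists t; rewrite // !inE ts tS.
Qed.

Lemma cnbhds_swap S s y : cnbhds S = setT -> s \in S ->
  (forall z, ~~ ext_private S s z) -> e s y -> cnbhds (y |: (S :\ s)) = setT.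
Proof.
move=> domS sS nopriv esy; apply/setP=> x; rewrite inE.
have /bigcupP[r rS xr] : x \in cnbhds S by rewrite domS inE.
have [rs | rs] := eqVneq r s; last first.
  by apply: (subsetP (cnbhd_sub _)) xr; rewrite !inE rs rS orbT.
move: xr; rewrite rs in_cnbhd => /orP[/eqP-> | esx].
  by apply: (subsetP (cnbhd_sub (setU11 y _))); rewrite in_cnbhd esym esy orbT.
have [xS | xS] := boolP (x \in S).
  apply: (subsetP (cnbhd_sub _)) (cnbhd_id x).
  by rewrite !inE xS andbT; apply/orP; right; apply: contraTneq esx => ->; rewrite eirr.
have [t tSs ext] := other_dominator (nopriv x) xS esx.
apply: (subsetP (cnbhd_sub (_ : t \in _))); first by rewrite inE tSs orbT.
by rewrite in_cnbhd esym ext orbT.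
Qed.

Definition isolated_in S := [set s in S | [forall t in S, ~~ e s t]].

Lemma isolated_in_swap S s y t :
  s \in isolated_in S -> t \in S :\ s -> e y t ->
  isolated_in (y |: (S :\ s)) \subset isolated_in S :\ s.
Proof.
rewrite !inE => /andP[sS /forall_inP isos] /andP[ts tS] eyt.
apply/subsetP=> a; rewrite !inE => /andP[aS' /forall_inP isoa].
have ay : a != y by apply: contraTneq eyt => <-; apply: isoa; rewrite !inE ts tS orbT.
move: aS'; rewrite (negbTE ay) /= => /andP[aNs aS]; rewrite aNs aS /=.
apply/forall_inP=> z zS; have [zs | zs] := eqVneq z s.
  by rewrite zs esym; apply: isos.
by apply: isoa; rewrite !inE zs zS orbT.
Qed.

Lemma exists_private_dominating : (forall x, nbhd x != set0) ->
  exists2 S, cnbhds S = setT & forall s, s \in S -> exists y, ext_private S s y.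
Proof.
(* Lexicographic weight: |S| first, then the number of vertices isolated in S. *)
move=> noiso; pose weight S := #|S| * #|T|.+1 + #|isolated_in S|.
have domT : cnbhds setT == setT.
  by apply/eqP/setP=> x; rewrite inE; apply/bigcupP; exists x; [exact: in_setT | exact: cnbhd_id].
case: (@arg_minnP _ setT (fun S => cnbhds S == setT) weight domT) => S /eqP domS minS.
exists S => // s sS; case: (pickP (ext_private S s)) => [y privy | nopriv]; first by exists y.
have swap y : e s y -> weight S <= weight (y |: (S :\ s)).
  by move=> esy; apply/minS/eqP/cnbhds_swap => // z; rewrite nopriv.
have isoT S' : #|isolated_in S'| <= #|T| := max_card _.
have [/exists_inP[t tS est] | noSnbr] := boolP [exists t in S, e s t].
  have tS' : t \in S :\ s by rewrite !inE tS andbT; apply: contraTneq est => ->; rewrite eirr.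
  have := swap t est; rewrite /weight cardsU1 tS' (cardsD1 s S) sS => le_w.
  by have := isoT S; have := isoT (t |: (S :\ s)); clear -le_w; nia.
have /set0Pn[y] := noiso s; rewrite in_nbhd => esy.
have yS : y \notin S by apply: contra noSnbr => yS; apply/exists_inP; exists y.
have [t tS' eyt] := other_dominator (negbT (nopriv y)) yS esy.
have isos : s \in isolated_in S by rewrite inE sS -negb_exists_in noSnbr.
have le_iso := subset_leq_card (isolated_in_swap isos tS' eyt).
have := swap y esy; rewrite /weight (cardsD1 s S) sS cardsU1 !inE (negbTE yS) andbF /= leq_add2l.
by rewrite (cardsD1 s (isolated_in S)) isos ltnNge le_iso.
Qed.

Definition strong_private S s := exists2 y, ext_private S s y & cnbhd y \subset cnbhds S.

Definition nested x := [exists c, e x c && (cnbhd c \subset cnbhd x)].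

Lemma not_nested_escape x y : ~~ nested x -> e x y -> exists2 z, e y z & z \notin cnbhd x.
Proof.
move=> notnested exy; move: notnested; rewrite negb_exists => /forallP/(_ y); rewrite exy /=.
case/subsetPn=> z; rewrite in_cnbhd => /orP[/eqP-> | eyz] zx; last by exists z.
by move: zx; rewrite in_cnbhd exy orbT.
Qed.

Lemma nested_strong_private a b :
  nested a -> b \notin cnbhd a -> strong_private [set a; b] a.
Proof.
case/existsP=> c /andP[eac subca] bNa; exists c; last first.
  by rewrite (subset_trans subca) // cnbhd_sub // set21.
have cNb : c != b by apply: contraNneq bNa => <-; rewrite in_cnbhd eac orbT.
rewrite /ext_private !inE negb_or cNb andbT eac; apply/andP; split.
  by apply: contraTneq eac => ->; rewrite eirr.
apply/forall_inP=> t /set2P[-> | ->]; first by rewrite eqxx implybT.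
by apply/implyP=> ecb; move: bNa; rewrite (subsetP subca) // in_cnbhd ecb orbT.
Qed.

Lemma twin_strong_private u v w :
  e u v -> w \notin cnbhd v -> nbhd w = nbhd v -> strong_private [set u; v] u.
Proof.
move=> euv wNv twin; have ewu : e w u by rewrite -in_nbhd twin in_nbhd esym.
exists w; last first.
  apply/subsetP=> z; rewrite in_cnbhd => /orP[/eqP-> | ewz].
    by apply: (subsetP (cnbhd_sub (set21 u v))); rewrite in_cnbhd esym ewu orbT.
  apply: (subsetP (cnbhd_sub (set22 u v))).
  by rewrite in_cnbhd -in_nbhd -twin in_nbhd ewz orbT.
move: wNv; rewrite in_cnbhd negb_or => /andP[wv evw].
rewrite /ext_private !inE negb_or wv esym ewu andbT /=; apply/andP; split.
  by apply: contraTneq ewu => ->; rewrite eirr.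
apply/forall_inP=> t /set2P[-> | ->]; first by rewrite eqxx implybT.
by apply/implyP=> ewv; move: evw; rewrite esym ewv.
Qed.

(** * Minimal dominating sets of K_m □ H *)

Section CartesianWithComplete.
Variables (m : nat) (c0 c1 : 'I_m).
Hypothesis c01 : c0 != c1.

Local Notation G := (cartesian_rel (@complete_rel m) e).

Lemma adjE j h k z : G (j, h) (k, z) = (j == k) && e h z || (h == z) && (j != k).
Proof. by []. Qed.

Lemma m_gt0 : 0 < m.
Proof. exact: leq_ltn_trans (leq0n c0) (ltn_ord c0). Qed.

Definition pad (F : {set 'I_m * T}) (A : {set T}) := F :|: setX [set c0] (~: A).

Lemma in_pad F A j h :
  ((j, h) \in pad F A) = ((j, h) \in F) || (j == c0) && (h \notin A).
Proof. by rewrite in_setU in_setX in_set1 in_setC. Qed.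

Section Pad.
Variables (F : {set 'I_m * T}) (A : {set T}).
Hypothesis FA : forall j h, (j, h) \in F -> h \in A.

Lemma card_pad : #|pad F A| = #|F| + (#|T| - #|A|).
Proof.
rewrite cardsU cardsX cards1 mul1n.
suff -> : F :&: setX [set c0] (~: A) = set0 by rewrite cards0; have := cardsC A; lia.
apply/setP=> -[j h]; rewrite !inE; apply/negbTE/andP=> -[/FA hA /andP[_]].
by rewrite hA.
Qed.

Lemma pad_dominates_out j h : h \notin A ->
  (j, h) \in pad F A \/ exists2 q, q \in pad F A & G (j, h) q.
Proof.
move=> hA; have [-> | jc] := eqVneq j c0; first by left; rewrite in_pad eqxx hA orbT.
by right; exists (c0, h); [rewrite in_pad eqxx hA orbT | rewrite adjE eqxx jc andbT orbT].
Qed.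

Lemma pad_private_out h k : h \notin A -> k != c0 ->
  (forall z, (k, z) \in F -> ~~ e h z) ->
  forall y, y \in pad F A -> y = (k, h) \/ G (k, h) y -> y = (c0, h).
Proof.
move=> hA kc Fk [j z]; rewrite in_pad => /orP[jzF | /andP[/eqP-> zA]].
  have zA := FA jzF; case=> [[_ zh] | ]; first by move: hA; rewrite -zh zA.
  rewrite adjE => /orP[/andP[/eqP kj ehz] | /andP[/eqP hz _]].
    by move: (Fk z); rewrite kj jzF ehz => /(_ isT).
  by move: hA; rewrite hz zA.
case=> [[kc0] | ]; first by move: kc; rewrite kc0 eqxx.
rewrite adjE => /orP[/andP[/eqP kc0 _] | /andP[/eqP-> //]].
by move: kc; rewrite kc0 eqxx.
Qed.

End Pad.

Definition fibre_dom S := pad (setX [set: 'I_m] S) (cnbhds S).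

Lemma fibre_in_cnbhds S j h : (j, h) \in setX [set: 'I_m] S -> h \in cnbhds S.
Proof. by rewrite in_setX => /andP[_ hS]; apply: (subsetP (cnbhd_sub hS)) (cnbhd_id h). Qed.

Lemma in_fibre_dom S j h :
  ((j, h) \in fibre_dom S) = (h \in S) || (j == c0) && (h \notin cnbhds S).
Proof. by rewrite in_pad in_setX in_setT. Qed.

Lemma card_fibre_dom S : #|fibre_dom S| = m * #|S| + (#|T| - #|cnbhds S|).
Proof. by rewrite card_pad ?cardsX ?cardsT ?card_ord //; apply: fibre_in_cnbhds. Qed.

Lemma fibre_dom_dominating S : dominating G (fibre_dom S).
Proof.
move=> [j h]; have [hA | hA] := boolP (h \in cnbhds S); last first.
  by apply: pad_dominates_out => //; apply: fibre_in_cnbhds.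
have [hS | hS] := boolP (h \in S); first by left; rewrite in_fibre_dom hS.
have /bigcupP[s sS] := hA; rewrite in_cnbhd => /orP[/eqP hs | esh].
  by move: hS; rewrite hs sS.
by right; exists (j, s); [rewrite in_fibre_dom sS | rewrite adjE eqxx esym esh].
Qed.

Lemma fibre_dom_minimal S : (forall s, s \in S -> strong_private S s) ->
  minimal_dominating G (fibre_dom S).
Proof.
move=> strongS; apply: private_minimal_dominating; first exact: fibre_dom_dominating.
move=> [j h]; rewrite in_fibre_dom => /orP[hS | /andP[/eqP-> hA]]; last first.
  exists (c1, h); apply: (pad_private_out (@fibre_in_cnbhds S) hA); first by rewrite eq_sym.
  move=> z; rewrite in_setX => /andP[_ zS]; apply: contra hA => ehz.
  by apply: (subsetP (cnbhd_sub zS)); rewrite in_cnbhd esym ehz orbT.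
have [y /and3P[yS ehy /forall_inP privy] suby] := strongS h hS.
exists (j, y) => -[k z]; rewrite in_fibre_dom => /orP[zS | /andP[_ zA]].
  case=> [[_ zy] | ]; first by move: yS; rewrite -zy zS.
  rewrite adjE => /orP[/andP[/eqP-> eyz] | /andP[/eqP yz _]].
    by rewrite (eqP (implyP (privy z zS) eyz)).
  by move: yS; rewrite yz zS.
move=> near; suff zy : z \in cnbhd y by move: zA; rewrite (subsetP suby _ zy).
case: near => [[_ ->] | ]; first exact: cnbhd_id.
by rewrite adjE in_cnbhd => /orP[/andP[_ ->] | /andP[/eqP-> _]]; rewrite ?eqxx ?orbT.
Qed.

Definition punctured_dom x := pad (setX [set~ c0] [set x]) (cnbhd x).

Lemma punctured_in_cnbhd x j h : (j, h) \in setX [set~ c0] [set x] -> h \in cnbhd x.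
Proof. by rewrite in_setX in_set1 => /andP[_ /eqP->]; apply: cnbhd_id. Qed.

Lemma in_punctured_dom x j h : ((j, h) \in punctured_dom x) =
  (j != c0) && (h == x) || (j == c0) && (h \notin cnbhd x).
Proof. by rewrite in_pad in_setX in_setC1 in_set1. Qed.

Lemma card_punctured_dom x : #|punctured_dom x| = m.-1 + (#|T| - #|cnbhd x|).
Proof.
rewrite card_pad ?cardsX ?cardsC1 ?cards1 ?card_ord ?muln1 //.
exact: punctured_in_cnbhd.
Qed.

Lemma punctured_dom_dominating x : ~~ nested x -> dominating G (punctured_dom x).
Proof.
move=> notnested [j h]; have [hA | hA] := boolP (h \in cnbhd x); last first.
  by apply: pad_dominates_out => //; apply: punctured_in_cnbhd.
have [-> | jc] := eqVneq j c0; move: hA; rewrite in_cnbhd => /orP[/eqP-> | exh].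
- right; exists (c1, x); last by rewrite adjE eqxx c01 andbT orbT.
  by rewrite in_punctured_dom eq_sym c01 eqxx.
- have [z ehz zx] := not_nested_escape notnested exh.
  by right; exists (c0, z); [rewrite in_punctured_dom eqxx zx orbT | rewrite adjE eqxx ehz].
- by left; rewrite in_punctured_dom jc eqxx.
- by right; exists (j, x); [rewrite in_punctured_dom jc eqxx | rewrite adjE eqxx esym exh].
Qed.

Lemma punctured_dom_minimal x : nbhd x != set0 -> ~~ nested x ->
  minimal_dominating G (punctured_dom x).
Proof.
move=> /set0Pn[y0]; rewrite in_nbhd => exy0 notnested.
apply: private_minimal_dominating; first exact: punctured_dom_dominating.
move=> [j h]; rewrite in_punctured_dom => /orP[/andP[jc /eqP->] | /andP[/eqP-> hA]]; last first.
  exists (c1, h); apply: (pad_private_out (@punctured_in_cnbhd x) hA); first by rewrite eq_sym.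
  move=> z; rewrite in_setX in_set1 => /andP[_ /eqP->]; apply: contra hA => ehx.
  by rewrite in_cnbhd esym ehx orbT.
have y0x : y0 != x by apply: contraTneq exy0 => ->; rewrite eirr.
exists (j, y0) => -[k z]; rewrite in_punctured_dom => /orP[/andP[kc /eqP->] | /andP[/eqP-> zA]].
  case=> [[_ xy0] | ]; first by move: y0x; rewrite xy0 eqxx.
  rewrite adjE => /orP[/andP[/eqP-> //] | /andP[/eqP y0x' _]].
  by move: y0x; rewrite y0x' eqxx.
case=> [[cj _] | ]; first by move: jc; rewrite cj eqxx.
rewrite adjE => /orP[/andP[/eqP jc' _] | /andP[/eqP y0z _]]; first by move: jc; rewrite jc' eqxx.
by move: zA; rewrite -y0z in_cnbhd exy0 orbT.
Qed.

Definition spread_dom x (f : 'I_m -> T) := pad [set (j, f j) | j : 'I_m] (cnbhd x).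

Section Spread.
Variables (x : T) (f : 'I_m -> T).
Hypothesis xf : forall j, e x (f j).
Hypothesis f_onto : nbhd x \subset f @: [set~ c0].

Lemma in_graph j h : ((j, h) \in [set (k, f k) | k : 'I_m]) = (h == f j).
Proof. by apply/imsetP/eqP=> [[k _ [-> ->]] // | ->]; exists j. Qed.

Lemma graph_in_cnbhd j h : (j, h) \in [set (k, f k) | k : 'I_m] -> h \in cnbhd x.
Proof. by rewrite in_graph => /eqP->; rewrite in_cnbhd xf orbT. Qed.

Lemma in_spread_dom j h :
  ((j, h) \in spread_dom x f) = (h == f j) || (j == c0) && (h \notin cnbhd x).
Proof. by rewrite in_pad in_graph. Qed.

Lemma card_spread_dom : #|spread_dom x f| = m + (#|T| - #|cnbhd x|).
Proof.
rewrite card_pad ?card_imset ?card_ord //; first by move=> a b [].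
exact: graph_in_cnbhd.
Qed.

Lemma nbhd_preimage y : e x y -> exists2 k, k != c0 & y = f k.
Proof. by rewrite -in_nbhd => /(subsetP f_onto)/imsetP[k]; rewrite in_setC1; exists k. Qed.

Lemma spread_dom_dominating : dominating G (spread_dom x f).
Proof.
move=> [j h]; have [hA | hA] := boolP (h \in cnbhd x); last first.
  by apply: pad_dominates_out => //; apply: graph_in_cnbhd.
move: hA; rewrite in_cnbhd => /orP[/eqP-> | exh].
  by right; exists (j, f j); [rewrite in_spread_dom eqxx | rewrite adjE eqxx xf].
have [k _ ->] := nbhd_preimage exh.
have [-> | jk] := eqVneq j k; first by left; rewrite in_spread_dom eqxx.
by right; exists (k, f k); [rewrite in_spread_dom eqxx | rewrite adjE eqxx jk andbT orbT].
Qed.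

Lemma spread_dom_minimal : (forall z, z \notin cnbhd x -> ~~ (nbhd x \subset nbhd z)) ->
  minimal_dominating G (spread_dom x f).
Proof.
move=> notsuper; apply: private_minimal_dominating; first exact: spread_dom_dominating.
have fx j : f j != x by apply: contraTneq (xf j) => ->; rewrite eirr.
move=> [j h]; rewrite in_spread_dom => /orP[/eqP-> | /andP[/eqP-> hA]].
  exists (j, x) => -[k z]; rewrite in_spread_dom => /orP[/eqP-> | /andP[_ zA]].
    case=> [[_ fkx] | ]; first by move: (fx k); rewrite fkx eqxx.
    rewrite adjE => /orP[/andP[/eqP-> //] | /andP[/eqP xfk _]].
    by move: (fx k); rewrite -xfk eqxx.
  case=> [[_ zx] | ]; first by move: zA; rewrite zx cnbhd_id.
  rewrite adjE => /orP[/andP[_ exz] | /andP[/eqP xz _]].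
    by move: zA; rewrite in_cnbhd exz orbT.
  by move: zA; rewrite -xz cnbhd_id.
have /subsetPn[y xy hy] := notsuper h hA.
have [k kc fky] : exists2 k, k != c0 & y = f k by apply: nbhd_preimage; rewrite -in_nbhd.
exists (k, h); apply: (pad_private_out graph_in_cnbhd hA kc) => z.
by rewrite in_graph => /eqP->; rewrite -fky -in_nbhd.
Qed.

End Spread.

Lemma card_fibre_dom0 : #|fibre_dom set0| = #|T|.
Proof. by rewrite card_fibre_dom cnbhds0 !cards0 muln0 subn0. Qed.

Lemma fibre_dom0_minimal : minimal_dominating G (fibre_dom set0).
Proof. by apply: fibre_dom_minimal => s; rewrite inE. Qed.

(** * Consequences of well-domination *)

Section WellDominated.
Hypothesis wdG : well_dominated G.

Lemma wd_dominating_ge D : dominating G D -> #|T| <= #|D|.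
Proof. by move=> domD; rewrite -card_fibre_dom0; apply: (wdG fibre_dom0_minimal).2. Qed.

Lemma wd_minimal_card D : minimal_dominating G D -> #|D| = #|T|.
Proof.
by move=> minD; rewrite -card_fibre_dom0; apply: well_dominated_cardE fibre_dom0_minimal.
Qed.

Lemma card_cnbhds_le S : #|cnbhds S| <= m * #|S|.
Proof.
have := wd_dominating_ge (fibre_dom_dominating S); rewrite card_fibre_dom.
by have := max_card (cnbhds S); lia.
Qed.

Lemma card_cnbhds_strong S : (forall s, s \in S -> strong_private S s) ->
  #|cnbhds S| = m * #|S|.
Proof.
move=> strongS; have := wd_minimal_card (fibre_dom_minimal strongS).
by rewrite card_fibre_dom; have := max_card (cnbhds S); lia.
Qed.

Lemma card_cnbhd_le x : #|cnbhd x| <= m.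
Proof. by have := card_cnbhds_le [set x]; rewrite cnbhds1 cards1 muln1. Qed.

Lemma card_cnbhd2 a b : a != b ->
  strong_private [set a; b] a -> strong_private [set b; a] b ->
  #|cnbhd a :|: cnbhd b| = m * 2.
Proof.
move=> ab sa sb; rewrite -cnbhds2 // card_cnbhds_strong ?cards2 ?ab //.
by move=> s /set2P[-> | ->] //; rewrite setUC.
Qed.

Lemma card_cnbhd_not_nested x : nbhd x != set0 -> ~~ nested x -> #|cnbhd x| = m.-1.
Proof.
move=> xnbr notnested; have := wd_minimal_card (punctured_dom_minimal xnbr notnested).
by rewrite card_punctured_dom; have := max_card (cnbhd x); lia.
Qed.

Lemma nested_of_card x : nbhd x != set0 -> #|cnbhd x| = m -> nested x.
Proof.
move=> xnbr cx; apply: contraT => /(card_cnbhd_not_nested xnbr).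
by rewrite cx; have := m_gt0; lia.
Qed.

Lemma exists_nbhd_super x : nbhd x != set0 -> #|cnbhd x| < m ->
  exists2 z, z \notin cnbhd x & nbhd x \subset nbhd z.
Proof.
move=> xnbr cx.
have [/exists_inP[z] | nosuper] := boolP [exists z in ~: cnbhd x, nbhd x \subset nbhd z].
  by rewrite in_setC; exists z.
have notsuper z : z \notin cnbhd x -> ~~ (nbhd x \subset nbhd z).
  by move=> zx; apply: (exists_inPn nosuper); rewrite in_setC.
have [f [fx f_onto]] : exists f : 'I_m -> T,
    (forall j, f j \in nbhd x) /\ nbhd x \subset f @: [set~ c0].
  apply: exists_onto; rewrite cardsC1 card_ord card_gt0 xnbr /=.
  by move: cx; rewrite card_cnbhd; lia.
have xf j : e x (f j) by rewrite -in_nbhd.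
have := wd_minimal_card (spread_dom_minimal xf f_onto notsuper).
rewrite (card_spread_dom xf) => card_eq; exfalso.
by have := max_card (cnbhd x); lia.
Qed.

Lemma nested_disjoint a b : nested a -> nested b -> a \notin cnbhd b ->
  [disjoint cnbhd a & cnbhd b].
Proof.
move=> na nb aNb; have bNa : b \notin cnbhd a by rewrite cnbhdC.
have ab : a != b by apply: contraNneq aNb => ->; apply: cnbhd_id.
have := card_cnbhd2 ab (nested_strong_private na bNa) (nested_strong_private nb aNb).
have [le_U <-] := leq_card_setU (cnbhd a) (cnbhd b).
by move=> card_U; apply/eqP; have := card_cnbhd_le a; have := card_cnbhd_le b; lia.
Qed.

Lemma card_cnbhd_across s t u v : [disjoint cnbhd s & cnbhd t] -> nested t ->
  e s u -> e u v -> v \in cnbhd t -> #|cnbhd u| = m.-1.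
Proof.
move=> st nt esu euv vt; apply: card_cnbhd_not_nested.
  by apply/set0Pn; exists s; rewrite in_nbhd esym.
apply/negP=> nu.
have uNt : u \notin cnbhd t by rewrite (disjointFr st) // in_cnbhd esu orbT.
by rewrite (disjointFr (nested_disjoint nu nt uNt)) // in_cnbhd euv orbT in vt.
Qed.

Lemma exists_false_twin s t u v : [disjoint cnbhd s & cnbhd t] -> nested t ->
  e s u -> e u v -> v \in cnbhd t -> exists2 w, w \notin cnbhd u & nbhd w = nbhd u.
Proof.
move=> st nt esu euv vt; have cu := card_cnbhd_across st nt esu euv vt.
have unbr : nbhd u != set0 by apply/set0Pn; exists s; rewrite in_nbhd esym.
have [|w wNu sub] := exists_nbhd_super unbr; first by rewrite cu; have := m_gt0; lia.
have esw : e s w by rewrite esym -in_nbhd (subsetP sub) // in_nbhd esym.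
have ewv : e w v by rewrite -in_nbhd (subsetP sub) // in_nbhd.
exists w => //; apply/eqP; rewrite eq_sym eqEcard sub /=.
by rewrite -ltnS -!card_cnbhd (card_cnbhd_across st nt esw ewv vt) cu.
Qed.

Lemma no_edge_between s t u v : [disjoint cnbhd s & cnbhd t] ->
  #|cnbhd s| = m -> #|cnbhd t| = m -> e s u -> e t v -> e u v -> False.
Proof.
move=> st cs ct esu etv euv; have ts : [disjoint cnbhd t & cnbhd s] by rewrite disjoint_sym.
have evu : e v u by rewrite esym.
have ns : nested s by apply: nested_of_card cs; apply/set0Pn; exists u; rewrite in_nbhd.
have nt : nested t by apply: nested_of_card ct; apply/set0Pn; exists v; rewrite in_nbhd.
have us : u \in cnbhd s by rewrite in_cnbhd esu orbT.
have vt : v \in cnbhd t by rewrite in_cnbhd etv orbT.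
have [w wNu twu] := exists_false_twin st nt esu euv vt.
have [w' w'Nv tw'v] := exists_false_twin ts ns etv evu us.
have uv : u != v by apply: contraTneq euv => ->; rewrite eirr.
have := card_cnbhd2 uv (twin_strong_private euv w'Nv tw'v) (twin_strong_private evu wNu twu).
have := (leq_card_setU (cnbhd u) (cnbhd v)).1.
rewrite (card_cnbhd_across st nt esu euv vt) (card_cnbhd_across ts ns etv evu us).
by move=> le_U card_U; have m0 := m_gt0; clear -le_U card_U m0; lia.
Qed.

Lemma cnbhds_tight S s : #|cnbhds S| = m * #|S| -> s \in S ->
  #|cnbhd s| = m /\ [disjoint cnbhd s & cnbhds (S :\ s)].
Proof.
move=> cS sS; move: cS; rewrite (cnbhdsD1 sS) (cardsD1 s S) sS add1n mulnS => cS.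
have le_s := card_cnbhd_le s; have le_rest := card_cnbhds_le (S :\ s).
have [le_U eq_U] := leq_card_setU (cnbhd s) (cnbhds (S :\ s)).
split; first by lia.
by rewrite -eq_U cS; apply/eqP; lia.
Qed.

Lemma connected_card_le : connected_graph e -> #|T| <= m.
Proof.
move=> conn; rewrite leqNgt; apply/negP=> ltmn.
have noiso x : nbhd x != set0 by apply: connected_nbhd_neq0 => //; have := m_gt0; lia.
have [S domS privS] := exists_private_dominating noiso.
have strongS s : s \in S -> strong_private S s.
  by move=> sS; have [y privy] := privS s sS; exists y; rewrite // domS subsetT.
have cardS := card_cnbhds_strong strongS.
have [s sS] : exists s, s \in S.
  have /card_gt0P[x0 _] : 0 < #|T| by apply: leq_ltn_trans ltmn.
  have /bigcupP[s sS _] : x0 \in cnbhds S by rewrite domS in_setT.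
  by exists s.
have [cs disj_s] := cnbhds_tight cardS sS.
have /card_gt0P[y] : 0 < #|~: cnbhd s| by have := cardsC (cnbhd s); lia.
rewrite in_setC => yNs.
have [a [b [aS bNs eab]]] := connected_cross conn (cnbhd_id s) yNs.
have /bigcupP[t tS bt] : b \in cnbhds S by rewrite domS in_setT.
have tSs : t \in S :\ s by rewrite in_setD1 tS andbT; apply: contraNneq bNs => <-.
have st : [disjoint cnbhd s & cnbhd t] := disjointWr (cnbhd_sub tSs) disj_s.
have esa : e s a.
  move: aS; rewrite in_cnbhd => /orP[/eqP as_ | //].
  by move: bNs; rewrite in_cnbhd -as_ eab orbT.
have etb : e t b.
  move: bt; rewrite in_cnbhd => /orP[/eqP bt_ | //].
  by move: (disjointFr st aS); rewrite in_cnbhd -bt_ esym eab orbT.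
exact: no_edge_between st cs (cnbhds_tight cardS tS).1 esa etb eab.
Qed.

End WellDominated.
End CartesianWithComplete.

End SimpleGraph.

Theorem proposition24 (m : nat) (T : finType) (e : rel T) :
  4 <= m ->
  simple_graph e ->
  connected_graph e ->
  m < #|T| ->
  ~ well_dominated (cartesian_rel (@complete_rel m) e).
Proof.
move=> m_ge4 [esym eirr] conn ltmn wdG.
have m_gt1 : 1 < m by apply: leq_trans m_ge4.
have c01 : Ordinal (ltnW m_gt1) != Ordinal m_gt1 by [].
by have := connected_card_le esym eirr c01 wdG conn; rewrite leqNgt ltmn.
Qed.
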